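(* Let $(M,\Sigma)$ be a measurable space, $r\ge1$, $\psi_1,\dots,\psi_r\colon\Sigma\to\mathbb{R}$ non-atomic countably additive charges, and $X\in\Sigma$ a set such that for each $i$ either $\psi_i(A)\ge0$ for all measurable $A\subseteq X$, or $\psi_i(A)\le0$ for all measurable $A\subseteq X$. Let $I^+$ be the set of indices $i$ for which $\psi_i(A)\ge0$ for all measurable $A\subseteq X$ (and $I^-$ the remaining indices, for which $\psi_i\le 0$ on subsets of $X$). If $I^+\neq\emptyset$, then $X$ has a strong solution, i.e. there is a partition $X=F_1\sqcup\dots\sqcup F_r$ into measurable sets with $\psi_i(F_i)\ge\psi_i(F_j)$ for all $i,j$.
   Context: A charge is a countably additive real-valued signed measure; it is non-atomic if the positive and negative parts $\mu^+,\mu^-$ of its Hahn–Jordan decomposition $\psi=\mu^+-\mu^-$ are non-atomic measures. Partition elements may be empty. *)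

From HB Require Import structures.
From mathcomp Require Import all_boot all_order all_algebra.
From mathcomp Require Import all_classical all_reals all_analysis.
Set Implicit Arguments. Unset Strict Implicit. Unset Printing Implicit Defensive.
Import Order.TTheory GRing.Theory Num.Theory.
Local Open Scope classical_set_scope.
Local Open Scope ring_scope.
Local Open Scope ereal_scope.

Definition measure_atom d (T : measurableType d) (R : realType)
  (mu : {measure set T -> \bar R}) (A : set T) : Prop :=
  [/\ measurable A, 0 < mu A &
      forall B, measurable B -> B `<=` A -> mu B = 0 \/ mu (A `\` B) = 0].

Definition nonatomic_measure d (T : measurableType d) (R : realType)
  (mu : {measure set T -> \bar R}) : Prop :=
  forall A, ~ measure_atom mu A.

(* A (finite, countably additive) charge is non-atomic when the positive and
   negative parts of its Hahn-Jordan decomposition are non-atomic measures.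
   (The Jordan parts do not depend on the choice of Hahn decomposition.) *)
Definition nonatomic_charge d (T : measurableType d) (R : realType)
  (nu : {charge set T -> \bar R}) : Prop :=
  exists P N (nuPN : hahn_decomposition nu P N),
    nonatomic_measure (jordan_pos nuPN) /\ nonatomic_measure (jordan_neg nuPN).

Definition strong_solution d (T : measurableType d) (R : realType) (r : nat)
  (psi : 'I_r -> {charge set T -> \bar R}) (X : set T) : Prop :=
  exists F : 'I_r -> set T,
    [/\ forall i, measurable (F i),
        \bigcup_i F i = X,
        trivIset setT F &
        forall i j, psi i (F j) <= psi i (F i)].

(* Every measurable set can be halved simultaneously for finitely many
   nonatomic finite measures, by induction on their number.  For one measure
   this is Sierpinski's theorem that a nonatomic measure takes every
   intermediate value, proved by greedy exhaustion.  For measures a, b, s,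
   halving a + b and s repeatedly yields a nondecreasing chain G t, 0 <= t <= 1,
   with m (G t) = t * m E for m = a + b and every m in s.  As a <= a + b, the
   map t |-> a (G t) is Lipschitz, and the intermediate value theorem gives c
   with a (G (c + 1/2) \ G c) = a E / 2; that set then also carries half of
   b.  The pieces of the partition are G ((j + 1) / r) \ G (j / r). *)

From HB Require Import structures.
From mathcomp Require Import all_boot all_order all_algebra.
From mathcomp Require Import all_classical all_reals all_analysis.
From mathcomp Require Import lra ring.
Import Order.TTheory GRing.Theory Num.Theory.
Import numFieldNormedType.Exports.
Set Implicit Arguments. Unset Strict Implicit. Unset Printing Implicit Defensive.
Local Open Scope classical_set_scope.
Local Open Scope ring_scope.

Lemma klipschitz_within_continuous (K : realFieldType) (V W : normedModType K)
    (k : K) (A : set V) (f : V -> W) :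
  k.-lipschitz_A f -> {within A, continuous f}.
Proof.
move=> fk; apply/subspace_continuousP => x Ax; apply/cvgrPdist_le => e e0.
have k1 : 0 < `|k| + 1 by rewrite ltr_wpDl.
rewrite near_withinE; near=> y => Ay.
apply: le_trans (fk (x, y) (conj Ax Ay)) _; rewrite /=.
apply: le_trans (_ : (`|k| + 1) * `|x - y| <= e).
  by rewrite ler_wpM2r // (le_trans (ler_norm k)) // lerDl.
rewrite -ler_pdivlMl //; near: y; apply/nbhs_normP.
exists (e / (`|k| + 1)); first by rewrite /= divr_gt0.
by move=> y /= /ltW; rewrite mulrC.
Unshelve. all: by end_near. Qed.

Lemma truncn_double_le (R : archiRealFieldType) (x : R) :
  ((Num.truncn x).*2 <= Num.truncn (2 * x))%N.
Proof.
have [x0|x0] := leP 0 x; last first.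
  by have /truncn0Pn -> : ~~ (1 <= x) by rewrite -ltNge (lt_trans x0).
rewrite truncn_ge_nat ?mulr_ge0 // -addnn natrD.
by have := truncn_le x; rewrite x0; lra.
Qed.

Lemma dyadic_truncn_cvg (R : realType) (t : R) : 0 <= t ->
  (Num.truncn (t * 2 ^+ n))%:R / 2 ^+ n @[n --> \oo] --> t.
Proof.
move=> t0; have p2 n : (0 : R) < 2 ^+ n by rewrite exprn_gt0.
apply: (@squeeze_cvgr _ _ _ _ (fun n => t - 2^-1 ^+ n) (cst t)); last 2 first.
- rewrite -[X in _ --> X]subr0; apply: cvgB; first exact: cvg_cst.
  by apply: cvg_expr; rewrite ger0_norm ?invr_ge0 // invf_lt1 // ltr1n.
- exact: cvg_cst.
apply: nearW => n; have /andP[kt tk] := truncn_itv (mulr_ge0 t0 (ltW (p2 n))).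
rewrite /= ler_pdivlMr // ler_pdivrMr // kt andbT exprVn mulrBl mulVf ?gt_eqF //.
by move: tk; rewrite -natr1; lra.
Qed.

Lemma mem_In (I : eqType) (x : I) (s : seq I) : x \in s -> List.In x s.
Proof.
by elim: s => //= y s IH; rewrite in_cons => /predU1P[->|/IH]; [left | right].
Qed.

Section NonatomicRMeasure.
Context d (T : measurableType d) (R : realType).

Record nonatomic_rmeasure (m : set T -> R) : Prop := NonatomicRMeasure {
  rmeasure_ge0 : forall A, measurable A -> 0 <= m A;
  rmeasureU : forall A B, measurable A -> measurable B -> A `&` B = set0 ->
    m (A `|` B) = m A + m B;
  rmeasure_cvg : forall F : nat -> set T, (forall n, measurable (F n)) ->
    (forall n, F n `<=` F n.+1) -> m (F n) @[n --> \oo] --> m (\bigcup_n F n);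
  rmeasure_split : forall A, measurable A -> 0 < m A ->
    exists B, [/\ measurable B, B `<=` A, 0 < m B & 0 < m (A `\` B)] }.

Lemma nonatomic_rmeasureD (a b : set T -> R) :
  nonatomic_rmeasure a -> nonatomic_rmeasure b ->
  nonatomic_rmeasure (a \+ b).
Proof.
move=> ha hb; split => /=.
- by move=> A mA; rewrite addr_ge0 // rmeasure_ge0.
- by move=> A B mA mB AB; rewrite (rmeasureU ha) // (rmeasureU hb) //; lra.
- by move=> F mF incF; apply: cvgD; apply: rmeasure_cvg.
- move=> A mA; have [a0 _|a0] := ltP 0 (a A).
    have [B [mB BA B0 AB0]] := rmeasure_split ha mA a0.
    have mAB := measurableD mA mB.
    by exists B; split => //; apply: ltr_pwDl => //; apply: rmeasure_ge0.
  have -> : a A = 0 by apply/eqP; rewrite eq_le a0 rmeasure_ge0.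
  rewrite add0r => b0; have [B [mB BA B0 AB0]] := rmeasure_split hb mA b0.
  have mAB := measurableD mA mB.
  by exists B; split => //; apply: ltr_wpDl => //; apply: rmeasure_ge0.
Qed.

Variable m : set T -> R.
Hypothesis hm : nonatomic_rmeasure m.

Lemma rmeasure0 : m set0 = 0.
Proof.
have := rmeasureU hm measurable0 measurable0 (setI0 set0).
by rewrite setU0; lra.
Qed.

Lemma rmeasureD A B : measurable A -> measurable B -> B `<=` A ->
  m (A `\` B) = m A - m B.
Proof.
move=> mA mB BA; rewrite -{2}(setDUK BA) (rmeasureU hm) ?setDIK //; first lra.
exact: measurableD.
Qed.

Lemma le_rmeasure A B : measurable A -> measurable B -> B `<=` A -> m B <= m A.
Proof.
move=> mA mB BA; have := rmeasure_ge0 hm (measurableD mA mB).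
by rewrite rmeasureD // subr_ge0.
Qed.

Lemma rmeasure_half_subset A : measurable A -> 0 < m A ->
  exists B, [/\ measurable B, B `<=` A, 0 < m B & m B * 2 <= m A].
Proof.
move=> mA A0; have [B [mB BA B0 AB0]] := rmeasure_split hm mA A0.
have eAB := rmeasureD mA mB BA.
have [BAB|ABB] := leP (m B) (m (A `\` B)); first by exists B; split => //; lra.
exists (A `\` B); split => //; [exact: measurableD | lra].
Qed.

Lemma rmeasure_small_subset A e : measurable A -> 0 < m A -> 0 < e ->
  exists B, [/\ measurable B, B `<=` A, 0 < m B & m B <= e].
Proof.
move=> mA A0 e0.
have halve n : exists B, [/\ measurable B, B `<=` A, 0 < m B & m B * 2 ^+ n <= m A].
  elim: n => [|n [B [mB BA B0 Bn]]]; first by exists A; split; rewrite ?expr0 ?mulr1.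
  have [C [mC CB C0 C2]] := rmeasure_half_subset mB B0.
  exists C; split => //; first exact: subset_trans BA.
  by apply: le_trans Bn; rewrite exprS mulrA ler_wpM2r ?exprn_ge0.
pose n := Num.bound (m A / e).
have [B [mB BA B0 Bn]] := halve n; exists B; split => //.
have n2n : m A / e < 2 ^+ n.
  apply: lt_le_trans (archi_boundP (divr_ge0 (ltW A0) (ltW e0))) _.
  by rewrite -natrX ler_nat ltnW // ltn_expl.
rewrite ltr_pdivrMr // in n2n.
by rewrite -(ler_pM2r (exprn_gt0 n (@ltr0Sn R 1))) [e * _]mulrC (le_trans Bn) // ltW.
Qed.

Lemma rmeasure_greedy_subset D c : measurable D -> 0 <= c -> exists B,
  [/\ measurable B, B `<=` D, m B <= c &
    forall B', measurable B' -> B' `<=` D -> m B' <= c -> m B' <= 2 * m B].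
Proof.
move=> mD c0.
pose S := [set m B | B in [set B | [/\ measurable B, B `<=` D & m B <= c]]].
have hS : has_sup S.
  split; first by exists 0, set0; rewrite /= ?rmeasure0; split.
  by exists c => _ [B [_ _ Bc] <-].
have [s0|s0] := leP (sup S) 0.
  exists set0; split; rewrite ?rmeasure0 ?mulr0 // => B' mB' B'D B'c.
  by apply: le_trans s0; apply: sup_upper_bound => //; exists B'.
have [_ [B [mB BD Bc] <-] hB] := sup_adherent (divr_gt0 s0 (@ltr0Sn R 1)) hS.
exists B; split => // B' mB' B'D B'c.
have : m B' <= sup S by apply: sup_upper_bound => //; exists B'.
lra.
Qed.

Lemma rmeasure_greedy_exhaustion E c : measurable E -> 0 <= c ->
  exists F : nat -> set T, [/\ forall n, measurable (F n), forall n, F n `<=` E,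
    forall n, F n `<=` F n.+1, forall n, m (F n) <= c &
    forall n B, measurable B -> B `<=` E `\` F n -> m B <= c - m (F n) ->
      m B <= 2 * (m (F n.+1) - m (F n))].
Proof.
move=> mE c0; pose admissible F := [/\ measurable F, F `<=` E & m F <= c].
have /choice[h hP] : forall F, exists G, admissible F ->
    [/\ measurable G, G `<=` E `\` F, m G <= c - m F &
      forall B, measurable B -> B `<=` E `\` F -> m B <= c - m F ->
        m B <= 2 * m G].
  move=> F; have [[mF FE Fc]|nF] := pselect (admissible F); last by exists set0.
  have cF : 0 <= c - m F by rewrite subr_ge0.
  by have [B hB] := rmeasure_greedy_subset (measurableD mE mF) cF; exists B.
have m_step F : admissible F -> m (F `|` h F) = m F + m (h F).
  move=> AF; have [mB BEF _ _] := hP F AF; have [mF _ _] := AF.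
  by rewrite (rmeasureU hm) //; apply/disjoints_subset => x Fx /BEF[_ /(_ Fx)].
pose F n := iter n (fun A => A `|` h A) set0.
have adm n : admissible (F n).
  elim: n => [|n AF]; first by rewrite /admissible /= rmeasure0; split.
  have [mF FE Fc] := AF; have [mB BEF Bc _] := hP _ AF.
  rewrite /admissible /= m_step //; split; first exact: measurableU.
  - by move=> x [/FE|/BEF[]].
  - lra.
exists F; split => [n|n|n|n|n B mB BEF Bc]; try by case: (adm n).
- exact: subsetUl.
- have [_ _ _ greedy] := hP _ (adm n).
  by rewrite /= m_step // addrAC subrr add0r; apply: greedy.
Qed.

Lemma rmeasure_intermediate_subset E c : measurable E -> 0 <= c <= m E ->
  exists F, [/\ measurable F, F `<=` E & m F = c].
Proof.
move=> mE /andP[c0 cE].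
have [F [mF FE incF Fc greedy]] := rmeasure_greedy_exhaustion mE c0.
pose Fi := \bigcup_n F n; have mFi : measurable Fi := bigcupT_measurable _ mF.
have FiE : Fi `<=` E by move=> x [n _ /FE].
have cvgF : m (F n) @[n --> \oo] --> m Fi by apply: (rmeasure_cvg hm).
have Fic : m Fi <= c by apply: (cvgr_to_le cvgF); apply: nearW.
exists Fi; split => //; apply/eqP; rewrite eq_le Fic leNgt; apply/negP => Fic'.
have EFi : 0 < m (E `\` Fi) by rewrite rmeasureD //; lra.
have cFi : 0 < c - m Fi by rewrite subr_gt0.
have [B [mB BEF B0 Bc]] := rmeasure_small_subset (measurableD mE mFi) EFi cFi.
(* [B] stays available to every greedy step, which therefore gains at least
   [m B / 2]; but the gains tend to 0. *)
have gap n : m B / 2 <= m (F n.+1) - m (F n).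
  have FFi : F n `<=` Fi by move=> x Fx; exists n.
  have := le_rmeasure mFi (mF n) FFi.
  have := greedy n B mB (subset_trans BEF (setDS FFi)); lra.
have cvg0 : m (F n.+1) - m (F n) @[n --> \oo] --> 0.
  rewrite -(subrr (m Fi)); apply: cvgB => //.
  by rewrite (cvg_shiftS (fun n => m (F n))).
have : m B / 2 <= 0 by apply: (cvgr_to_ge cvg0); apply: nearW.
lra.
Qed.

End NonatomicRMeasure.

Section ProportionalChain.
Context d (T : measurableType d) (R : realType).

Definition halving (l : seq (set T -> R)) := forall E, measurable E ->
  exists F, [/\ measurable F, F `<=` E & forall m, List.In m l -> m F = m E / 2].

Definition proportional_chain (l : seq (set T -> R)) E (G : R -> set T) :=
  [/\ forall t, measurable (G t), forall t, G t `<=` E,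
     {homo G : s t / s <= t >-> s `<=` t}, G 0 = set0 /\ G 1 = E &
     forall m t, List.In m l -> 0 <= t <= 1 -> m (G t) = t * m E].

Section DyadicChain.
Variables (l : seq (set T -> R)) (E : set T) (h : set T -> set T).
Hypothesis hl : forall m, List.In m l -> nonatomic_rmeasure m.
Hypothesis mE : measurable E.
Hypothesis mh : forall A, measurable A -> measurable (h A).
Hypothesis hsub : forall A, h A `<=` A.
Hypothesis hhalf : forall m A, List.In m l -> measurable A -> m (h A) = m A / 2.

(* [dyadic_set n k] is the union of the first [k] of the [2 ^ n] pieces into
   which [n] rounds of bisection by [h] cut [E]. *)
Fixpoint dyadic_set (n k : nat) : set T :=
  if n is n'.+1 then
    let A := dyadic_set n' k./2 in
    if odd k then A `|` h (dyadic_set n' k./2.+1 `\` A) else A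
  else if k is 0 then set0 else E.

Lemma dyadic_set0 n : dyadic_set n 0 = set0.
Proof. by elim: n. Qed.

Lemma dyadic_set_double n k : dyadic_set n.+1 k.*2 = dyadic_set n k.
Proof. by rewrite /= odd_double doubleK. Qed.

Lemma dyadic_set_doubleS n k : dyadic_set n.+1 k.*2.+1 =
  dyadic_set n k `|` h (dyadic_set n k.+1 `\` dyadic_set n k).
Proof. by rewrite /= odd_double /= uphalf_double. Qed.

Lemma measurable_dyadic_set n k : measurable (dyadic_set n k).
Proof.
elim: n k => [[|k]|n IH k] //=; case: ifP => // _.
by apply: measurableU => //; apply/mh/measurableD.
Qed.

Lemma dyadic_set_sub n k : dyadic_set n k `<=` E.
Proof.
elim: n k => [[|k]|n IH k] //=; case: ifP => // _.
by rewrite subUset; split => [x /IH | x /hsub[/IH]].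
Qed.

Lemma dyadic_setS n k : dyadic_set n k `<=` dyadic_set n k.+1.
Proof.
elim: n k => [[|k]|n IH k] //=; rewrite uphalf_half.
case: (odd k) => /=; last by apply: subsetUl.
by rewrite subUset; split => [|x /hsub[]//]; apply: IH.
Qed.

Lemma le_dyadic_set n : {homo dyadic_set n : j k / (j <= k)%N >-> j `<=` k}.
Proof.
apply: homo_leq => [A|B A C AB BC|]; first exact: subset_refl.
  exact: subset_trans AB BC.
exact: dyadic_setS.
Qed.

Lemma rmeasure_dyadic_set m n k : List.In m l -> (k <= 2 ^ n)%N ->
  m (dyadic_set n k) = k%:R / 2 ^+ n * m E.
Proof.
move=> lm; have hm := hl lm; elim: n k => [|n IH] k.
  by case: k => [|[|]] //= _; rewrite ?rmeasure0 ?mul0r ?divr1 ?mul1r.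
have h2 : (2 ^+ n.+1 : R) = 2 * 2 ^+ n by rewrite exprS.
have n2 : (2 ^+ n : R) != 0 by rewrite expf_neq0.
rewrite -(odd_double_half k) expnS mul2n; case: (odd k); set j := k./2.
all: rewrite ?add1n ?add0n => kn.
- have jn : (j < 2 ^ n)%N by rewrite -ltn_double; apply: leq_trans kn.
  have mj := measurable_dyadic_set n j; have mjS := measurable_dyadic_set n j.+1.
  have mD := measurableD mjS mj.
  rewrite dyadic_set_doubleS (rmeasureU hm) //; last 2 first.
  + exact: mh.
  + by apply/disjoints_subset => x Ax /hsub[].
  rewrite (hhalf lm) // (rmeasureD hm) // ?IH ?(ltnW jn) //; last exact: dyadic_setS.
  by rewrite h2 -addn1 -addnn !natrD; field.
- rewrite dyadic_set_double IH; last by rewrite -leq_double.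
  by rewrite h2 -addnn natrD; field.
Qed.

Definition dyadic_chain (t : R) : set T :=
  \bigcup_n dyadic_set n (Num.truncn (t * 2 ^+ n)).

Lemma dyadic_approxS (t : R) n :
  dyadic_set n (Num.truncn (t * 2 ^+ n)) `<=`
  dyadic_set n.+1 (Num.truncn (t * 2 ^+ n.+1)).
Proof.
rewrite -dyadic_set_double; apply: le_dyadic_set.
by rewrite exprS mulrCA truncn_double_le.
Qed.

Lemma proportional_dyadic_chain : proportional_chain l E dyadic_chain.
Proof.
split.
- by move=> t; apply: bigcupT_measurable => n; apply: measurable_dyadic_set.
- by move=> t x [n _ /dyadic_set_sub].
- move=> s t st x [n _ Gx]; exists n => //; apply: le_dyadic_set Gx.
  by rewrite le_truncn // ler_wpM2r // exprn_ge0.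
- split; first by apply/seteqP; split => // x [n _]; rewrite mul0r truncn0 dyadic_set0.
  apply/seteqP; split => [x [n _ /dyadic_set_sub] //|x Ex].
  by exists 0%N => //; rewrite expr0 mulr1 truncn1.
- move=> m t lm /andP[t0 t1].
  have kn n : (Num.truncn (t * 2 ^+ n) <= 2 ^ n)%N.
    rewrite -[X in (_ <= X)%N](@natrK R) natrX le_truncn //.
    by rewrite ler_piMl ?exprn_ge0.
  have := rmeasure_cvg (hl lm) (fun n => measurable_dyadic_set n _)
    (@dyadic_approxS t).
  under eq_fun => n do rewrite (rmeasure_dyadic_set lm (kn n)).
  move=> cvgG; apply: (cvg_unique (@Rhausdorff R) cvgG).
  by apply: cvgMr_tmp; exact: dyadic_truncn_cvg.
Qed.

End DyadicChain.

Lemma proportional_chain_of_halving l E :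
  (forall m, List.In m l -> nonatomic_rmeasure m) -> halving l -> measurable E ->
  exists G, proportional_chain l E G.
Proof.
move=> hl hh mE.
have /choice[h hP] : forall A, exists B, B `<=` A /\ (measurable A ->
    measurable B /\ forall m, List.In m l -> m B = m A / 2).
  move=> A; have [mA|nA] := pselect (measurable A).
    by have [B [mB BA hB]] := hh A mA; exists B.
  by exists set0; split => // /nA.
exists (dyadic_chain E h); apply: proportional_dyadic_chain => //.
- by move=> A /(hP A).2[].
- by move=> A; case: (hP A).
- by move=> m A lm /(hP A).2[_ ->].
Qed.

Lemma proportional_chain_lipschitz (a b : set T -> R) s E G :
  nonatomic_rmeasure a -> nonatomic_rmeasure b ->
  proportional_chain (a \+ b :: s) E G ->
  ((a \+ b) E).-lipschitz_(`[0, 1]) (fun t => a (G t)).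
Proof.
move=> ha hb [mG _ homoG _ Gm] [u v] /=; rewrite !in_itv /= => -[hu hv].
wlog vu : u v hu hv / v <= u => [hw|].
  have [/hw|/ltW uv] := leP v u; first exact.
  by rewrite distrC [`|u - v|]distrC hw.
have hab := nonatomic_rmeasureD ha hb; have Gvu := homoG _ _ vu.
have inab : List.In (a \+ b) (a \+ b :: s) by left.
have mD := measurableD (mG u) (mG v).
have := rmeasureD hab (mG u) (mG v) Gvu.
rewrite (Gm _ _ inab hu) (Gm _ _ inab hv) -mulrBl mulrC /= => eab.
have := rmeasureD ha (mG u) (mG v) Gvu.
have := rmeasure_ge0 ha mD; have := rmeasure_ge0 hb mD.
rewrite !ger0_norm ?subr_ge0 ?(le_rmeasure ha) //.
by move: eab; set k := _ * (u - v); lra.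
Qed.

Lemma halving_of_sum_chain (a b : set T -> R) s :
  nonatomic_rmeasure a -> nonatomic_rmeasure b ->
  (forall m, List.In m s -> nonatomic_rmeasure m) ->
  (forall E, measurable E -> exists G, proportional_chain (a \+ b :: s) E G) ->
  halving [:: a, b & s].
Proof.
move=> ha hb hs hc E mE; have [G chG] := hc E mE.
have a_lip := proportional_chain_lipschitz ha hb chG.
have [mG GE homoG [G0 G1] Gm] := chG.
have i01 (z : R) : z \in `[0, 2^-1] -> 0 <= z <= 1 /\ 0 <= z + 2^-1 <= 1.
  by rewrite !in_itv /= => /andP[z0 z1]; split; apply/andP; split; lra.
pose f t := a (G (t + 2^-1)) - a (G t).
have f_lip : (2 * (a \+ b) E).-lipschitz_(`[0, 2^-1]) f.
  move=> [x y] /= [/i01[x01 x'01] /i01[y01 y'01]].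
  have := a_lip (x, y) (conj x01 y01); have := a_lip (_, _) (conj x'01 y'01) => /=.
  have := ler_normB (a (G (x + 2^-1)) - a (G (y + 2^-1))) (a (G x) - a (G y)).
  have -> : x + 2^-1 - (y + 2^-1) = x - y by ring.
  rewrite -/(f x) -/(f y) -mulrA; set k := _ * `|x - y|.
  have -> : a (G (x + 2^-1)) - a (G (y + 2^-1)) - (a (G x) - a (G y)) = f x - f y.
    by rewrite /f; ring.
  lra.
have f0 : f 0 = a (G 2^-1) by rewrite /f add0r G0 rmeasure0 // subr0.
have fh : f 2^-1 = a E - a (G 2^-1).
  by rewrite /f (_ : 2^-1 + 2^-1 = 1) ?G1 //; field.
have hv : Num.min (f 0) (f 2^-1) <= a E / 2 <= Num.max (f 0) (f 2^-1).
  rewrite f0 fh ge_min le_max; case/orP: (le_total (a (G 2^-1)) (a E / 2)) => h.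
    by apply/andP; split; apply/orP; [left | right]; lra.
  by apply/andP; split; apply/orP; [right | left]; lra.
have [|c /i01[c01 c'01] fc] := IVT _ (klipschitz_within_continuous f_lip) hv.
  by rewrite invr_ge0.
have Gc : G c `<=` G (c + 2^-1) by apply: homoG; rewrite lerDl invr_ge0.
have hK m : List.In m (a \+ b :: s) -> m (G (c + 2^-1) `\` G c) = m E / 2.
  move=> lm; have hm : nonatomic_rmeasure m.
    by case: lm => [<-|/hs //]; apply: nonatomic_rmeasureD.
  by rewrite (rmeasureD hm) // !Gm //; field.
exists (G (c + 2^-1) `\` G c); split; [exact: measurableD | by move=> x [/GE] |].
have aK : a (G (c + 2^-1) `\` G c) = a E / 2 by rewrite (rmeasureD ha).
move=> m /= [<-|[<-|ms]] //; last by apply: hK; right.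
have /= := hK _ (or_introl erefl); rewrite aK => abK.
by apply: (addrI (a E / 2)); rewrite abK; field.
Qed.

Lemma halving_nonatomic (s : seq (set T -> R)) :
  (forall m, List.In m s -> nonatomic_rmeasure m) -> halving s.
Proof.
move: {2}(size s) (leqnn (size s)) => n.
elim: n s => [|n IH] [|a [|b s]] //= sn hs; try by move=> E mE; exists E; split.
  move=> E mE; have ha := hs a (or_introl erefl).
  have aE : 0 <= a E / 2 <= a E.
    have := rmeasure_ge0 ha mE => a0; apply/andP; split; lra.
  have [F [mF FE aF]] := rmeasure_intermediate_subset ha mE aE.
  by exists F; split => // m [<-|].
have hab m : List.In m (a \+ b :: s) -> nonatomic_rmeasure m.
  move=> [<-|ms]; last by apply: hs; right; right.
  by apply: nonatomic_rmeasureD; apply: hs; [left | right; left].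
apply: halving_of_sum_chain => [|||E mE].
- by apply: hs; left.
- by apply: hs; right; left.
- by move=> m ms; apply: hs; right; right.
- by apply: proportional_chain_of_halving => //; apply: IH.
Qed.

Lemma proportional_chain_partition (l : seq (set T -> R)) E G r :
  (forall m, List.In m l -> nonatomic_rmeasure m) ->
  proportional_chain l E G -> (0 < r)%N ->
  exists F : 'I_r -> set T, [/\ forall i, measurable (F i), \bigcup_i F i = E,
    trivIset setT F & forall m i, List.In m l -> m (F i) = m E / r%:R].
Proof.
move=> hl [mG GE homoG [G0 G1] Gm] r0.
pose t k : R := k%:R / r%:R.
have t01 k : (k <= r)%N -> 0 <= t k <= 1.
  by move=> kr; rewrite divr_ge0 //= ler_pdivrMr ?ltr0n // mul1r ler_nat.
have homot j k : (j <= k)%N -> G (t j) `<=` G (t k).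
  by move=> jk; apply: homoG; rewrite ler_pM2r ?invr_gt0 ?ltr0n // ler_nat.
pose F (i : 'I_r) := G (t i.+1) `\` G (t i).
exists F; split.
- by move=> i; apply: measurableD.
- apply/seteqP; split => [x [i _ [/GE]] //|x Ex].
  have Gr : G (t r) x by rewrite /t divff ?pnatr_eq0 -?lt0n // G1.
  have [k /asboolP Gk kmin] :=
    ex_minnP (ex_intro (fun k => `[< G (t k) x >]) r (asboolT Gr)).
  case: k Gk kmin => [|k] Gk kmin; first by move: Gk; rewrite /t mul0r G0.
  have kr : (k < r)%N by apply: kmin; apply/asboolP.
  by exists (Ordinal kr) => //; split => // /asboolT /kmin; rewrite ltnn.
- move=> i j _ _ [x [[Gi nGi] [Gj nGj]]]; apply: val_inj => /=.
  have [ij|ji|] //= := ltngtP i j; first by case: nGj; apply: homot Gi.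
  by case: nGi; apply: homot Gj.
- move=> m i lm; have hm := hl _ lm.
  rewrite (rmeasureD hm) //; last exact: homot.
  rewrite !Gm ?t01 //; last exact: ltnW.
  by rewrite /t -addn1 natrD; field; rewrite pnatr_eq0 -lt0n.
Qed.

End ProportionalChain.

Section JordanParts.
Context d (T : measurableType d) (R : realType).

Lemma nonatomic_rmeasure_fine (mu : {measure set T -> \bar R}) :
  (forall A, measurable A -> mu A \is a fin_num) -> nonatomic_measure mu ->
  nonatomic_rmeasure (fun A => fine (mu A)).
Proof.
move=> fin na; have lt0 A : measurable A -> (0 < fine (mu A)) = (0 < mu A)%E.
  by move=> mA; rewrite -lte_fin fineK ?fin.
split.
- by move=> A mA; apply/fine_ge0/measure_ge0.
- by move=> A B mA mB AB; rewrite measureU // fineD ?fin.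
- move=> F mF incF; have mU := bigcupT_measurable _ mF.
  have ndF : nondecreasing_seq F by apply/nondecreasing_seqP => n; rewrite subsetEset.
  have := @nondecreasing_cvg_mu _ _ _ mu F mF mU ndF.
  by rewrite -(fineK (fin _ mU)) => /fine_cvg.
- move=> A mA; rewrite lt0 // => A0.
  have /existsNP[B /not_implyP[mB /not_implyP[BA /not_orP[B0 AB0]]]] :
    ~ (forall B, measurable B -> B `<=` A -> mu B = 0 \/ mu (A `\` B) = 0)%E.
    by move=> h; apply: (na A); split.
  have mAB := measurableD mA mB.
  by exists B; split; rewrite ?lt0 // lt0e measure_ge0 andbT; apply/eqP.
Qed.

Lemma nonatomic_charge_jordan (nu : {charge set T -> \bar R}) :
  nonatomic_charge nu -> exists p n, [/\ nonatomic_rmeasure p,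
    nonatomic_rmeasure n & forall A, measurable A -> nu A = (p A - n A)%:E].
Proof.
move=> [P [N [nuPN [hp hn]]]].
exists (fun A => fine (jordan_pos nuPN A)), (fun A => fine (jordan_neg nuPN A)).
split; [exact: nonatomic_rmeasure_fine (fin_num_measure _) hp
       | exact: nonatomic_rmeasure_fine (fin_num_measure _) hn |].
move=> A mA; rewrite (jordan_decomp nuPN mA) /cadd /cscale /= cscaleN1 EFinB.
by rewrite !fineK //; apply: fin_num_measure.
Qed.

End JordanParts.

Local Open Scope ereal_scope.
Theorem lemma7 (d : measure_display) (T : measurableType d) (R : realType)
  (r : nat) (hr : (1 <= r)%N)
  (psi : 'I_r -> {charge set T -> \bar R})
  (hna : forall i, nonatomic_charge (psi i))
  (X : set T) (mX : measurable X)
  (hsign : forall i,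
     (forall A, measurable A -> A `<=` X -> 0 <= psi i A) \/
     (forall A, measurable A -> A `<=` X -> psi i A <= 0))
  (hIpos : exists i, forall A, measurable A -> A `<=` X -> 0 <= psi i A) :
  strong_solution psi X.
Proof.
have /choice[p hp] := fun i => nonatomic_charge_jordan (hna i).
have /choice[n hn] := hp.
pose l := [seq p i | i <- enum 'I_r] ++ [seq n i | i <- enum 'I_r].
have in_l i : List.In (p i) l /\ List.In (n i) l.
  by split; apply/List.in_app_iff; [left | right]; apply/List.in_map/mem_In/mem_enum.
have hl m : List.In m l -> nonatomic_rmeasure m.
  by case/List.in_app_iff => /List.in_map_iff[i [<- _]]; case: (hn i).
have [G hG] := proportional_chain_of_halving hl (halving_nonatomic hl) mX.
have [F [mF FX tF Fm]] := proportional_chain_partition hl hG hr.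
exists F; split => // i j; have [_ _ psiE] := hn i; have [lp ln] := in_l i.
by rewrite !psiE // !Fm.
Qed.
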